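(* Let $R$ be a (von Neumann) regular $K$-algebra, $J$ an ideal of $R$, and $\pi : R \to R/J$ the quotient map. If $A$ is a finite dimensional subalgebra of $R/J$, then $R$ has a finite dimensional subalgebra $T$ such that $\pi$ restricts to an algebra isomorphism of $T$ onto $A$. In particular, if $R/J$ is finite dimensional, there is a subalgebra $T$ of $R$ with $R = T \oplus J$ as $K$-vector spaces.
   Context: $K$ is a field. All algebras are associative but not necessarily unital $K$-algebras; ideals are two-sided ring ideals that are also $K$-subspaces. A ring $R$ is (von Neumann) regular if for every $x\in R$ there is $y \in R$ with $xyx = x$. *)

(* Non-unital associative K-algebras are modelled as a
   K-vector space (lmodType K) equipped with an explicit bilinear associative
   multiplication, since MathComp's ring structures are unital. *)
From HB Require Import structures.
From mathcomp Require Import all_boot all_algebra.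
Set Implicit Arguments. Unset Strict Implicit. Unset Printing Implicit Defensive.
Import GRing.Theory.
Local Open Scope ring_scope.

Definition is_algebra_mul (K : fieldType) (V : lmodType K) (mul : V -> V -> V) : Prop :=
  [/\ (forall x y z, mul x (mul y z) = mul (mul x y) z),
      (forall x y z, mul (x + y) z = mul x z + mul y z),
      (forall x y z, mul x (y + z) = mul x y + mul x z),
      (forall (a : K) x y, mul (a *: x) y = a *: mul x y)
    & (forall (a : K) x y, mul x (a *: y) = a *: mul x y)].

Definition is_subspace (K : fieldType) (V : lmodType K) (S : V -> Prop) : Prop :=
  [/\ S 0, (forall x y, S x -> S y -> S (x + y)) & (forall (a : K) x, S x -> S (a *: x))].

Definition fin_dim (K : fieldType) (V : lmodType K) (S : V -> Prop) : Prop :=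
  exists (n : nat) (v : 'I_n -> V), (forall i, S (v i)) /\
    (forall x, S x -> exists c : 'I_n -> K, x = \sum_(i < n) c i *: v i).

Definition is_subalgebra (K : fieldType) (V : lmodType K) (mul : V -> V -> V)
  (S : V -> Prop) : Prop :=
  is_subspace S /\ (forall x y, S x -> S y -> S (mul x y)).

Definition is_ideal (K : fieldType) (V : lmodType K) (mul : V -> V -> V)
  (J : V -> Prop) : Prop :=
  is_subspace J /\ (forall r x, J x -> J (mul r x) /\ J (mul x r)).

Definition vn_regular (K : fieldType) (V : lmodType K) (mul : V -> V -> V) : Prop :=
  forall x, exists y, mul (mul x y) x = x.

(* pi : R -> Q is (up to isomorphism) the quotient map R -> R/J:
   a surjective K-linear multiplicative map whose kernel is exactly J,
   where mulQ is the multiplication of Q = R/J. *)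
Definition is_quotient_map (K : fieldType) (R : lmodType K) (mulR : R -> R -> R)
  (J : R -> Prop) (Q : lmodType K) (mulQ : Q -> Q -> Q) (pi : R -> Q) : Prop :=
  [/\ (forall (a : K) x y, pi (a *: x + y) = a *: pi x + pi y),
      (forall x y, pi (mulR x y) = mulQ (pi x) (pi y)),
      (forall q, exists x, pi x = q)
    & (forall x, pi x = 0 <-> J x)].

From HB Require Import structures.
From mathcomp Require Import all_boot all_algebra.
From Stdlib Require Import Classical.
Import GRing.Theory.
Local Open Scope ring_scope.
Set Implicit Arguments. Unset Strict Implicit.

(* Lift a basis [b] of [A] to elements [x] of [R]; the products [x i * x k]
   violate the structure constants of [A] only by defects lying in [J].  In a
   regular algebra the finitely generated right ideal [L] spanned by the
   defects and their left multiples by the [x l] has a left unit [u] in [L].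
   Since [x i L] is contained in [L] we get [u x i u = x i u], so that the
   corrected lifts [(1 - u) x i] multiply exactly as the [b i] do; as [u] lies
   in [J] they still map onto [b], and they span the required copy of [A]. *)

Section Span.
Variables (K : fieldType) (V : lmodType K).

Definition in_span n (v : 'I_n -> V) (x : V) : Prop :=
  exists c : 'I_n -> K, x = \sum_i c i *: v i.

Definition free_family n (v : 'I_n -> V) : Prop :=
  forall c : 'I_n -> K, \sum_i c i *: v i = 0 -> forall i, c i = 0.

Lemma in_span_subspace n (v : 'I_n -> V) : is_subspace (in_span v).
Proof.
split.
- by exists (fun=> 0); rewrite big1 // => i _; rewrite scale0r.
- move=> _ _ [c ->] [d ->]; exists (fun i => c i + d i).
  by rewrite -big_split; apply: eq_bigr => i _; rewrite scalerDl.
- move=> a _ [c ->]; exists (fun i => a * c i).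
  by rewrite scaler_sumr; apply: eq_bigr => i _; rewrite scalerA.
Qed.

Lemma in_span_gen n (v : 'I_n -> V) i : in_span v (v i).
Proof.
exists (fun k => (k == i)%:R); rewrite (bigD1 i) //= eqxx scale1r big1 ?addr0 //.
by move=> k /negbTE ->; rewrite scale0r.
Qed.

Lemma subspace_sum (S : V -> Prop) (I : Type) (r : seq I) (F : I -> V) :
  is_subspace S -> (forall i, S (F i)) -> S (\sum_(i <- r) F i).
Proof. by case=> S0 SD _ SF; apply: big_ind. Qed.

Lemma in_span_sub (S : V -> Prop) n (v : 'I_n -> V) x :
  is_subspace S -> (forall i, S (v i)) -> in_span v x -> S x.
Proof.
move=> Ssub Sv [c ->]; apply: subspace_sum => // i.
by case: Ssub => _ _ SZ; apply: SZ.
Qed.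

Lemma free_family_coord n (v : 'I_n -> V) (c d : 'I_n -> K) :
  free_family v -> \sum_i c i *: v i = \sum_i d i *: v i -> c =1 d.
Proof.
move=> freev /eqP; rewrite -subr_eq0 -sumrB => /eqP cd i; apply/eqP.
rewrite -subr_eq0; apply/eqP/(freev (fun i => c i - d i)).
by rewrite -[RHS]cd; apply: eq_bigr => k _; rewrite scalerBl.
Qed.

(* A vanishing combination with [c i != 0] expresses [v i] through the others. *)
Lemma in_span_drop n (v : 'I_n.+1 -> V) (c : 'I_n.+1 -> K) i x :
  \sum_k c k *: v k = 0 -> c i != 0 -> in_span v x ->
  in_span (fun k => v (lift i k)) x.
Proof.
rewrite (bigD1_ord i) //= => c0 ci [d ->].
have vi : v i = - ((c i)^-1 *: \sum_(k < n) c (lift i k) *: v (lift i k)).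
  apply/eqP; rewrite -subr_eq0 opprK -[v i]scale1r -(mulVf ci).
  by rewrite -scalerA -scalerDr c0 scaler0.
exists (fun k => d (lift i k) - d i / c i * c (lift i k)).
rewrite (bigD1_ord i) //= vi; apply/esym.
under eq_bigr do rewrite scalerBl -scalerA.
by rewrite sumrB -scaler_sumr scalerN scalerA addrC.
Qed.

Lemma free_spanning_family (S : V -> Prop) n (v : 'I_n -> V) :
  (forall i, S (v i)) -> (forall x, S x -> in_span v x) ->
  exists m (b : 'I_m -> V),
    [/\ forall i, S (b i), forall x, S x -> in_span b x & free_family b].
Proof.
elim: n v => [|n IHn] v Sv spanv.
  by exists 0, v; split => // c _ [].
have [freev|dep] := classic (free_family v); first by exists n.+1, v.
have [c [c0 [i ci]]] : exists c, \sum_i c i *: v i = 0 /\ exists i, c i != 0.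
  apply: NNPP => indep; apply: dep => c c0 i; apply: NNPP => ci.
  by apply: indep; exists c; split => //; exists i; apply/eqP.
apply: (IHn (fun k => v (lift i k))) => [k|x /spanv]; first exact: Sv.
exact: in_span_drop c0 ci.
Qed.

End Span.

Section Multiplication.
Variables (K : fieldType) (V : lmodType K) (mul : V -> V -> V).
Hypothesis mul_alg : is_algebra_mul mul.

Lemma amulA x y z : mul x (mul y z) = mul (mul x y) z.
Proof. by case: mul_alg. Qed.

Lemma amulDl x y z : mul (x + y) z = mul x z + mul y z.
Proof. by case: mul_alg. Qed.

Lemma amulDr x y z : mul x (y + z) = mul x y + mul x z.
Proof. by case: mul_alg. Qed.

Lemma amulZl a x y : mul (a *: x) y = a *: mul x y.
Proof. by case: mul_alg. Qed.

Lemma amulZr a x y : mul x (a *: y) = a *: mul x y.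
Proof. by case: mul_alg. Qed.

Lemma amulBl x y z : mul (x - y) z = mul x z - mul y z.
Proof. by rewrite -{2}(subrK y x) (amulDl (x - y)) addrK. Qed.

Lemma amulBr x y z : mul x (y - z) = mul x y - mul x z.
Proof. by rewrite -{2}(subrK z y) (amulDr x (y - z)) addrK. Qed.

Lemma amul0l x : mul 0 x = 0.
Proof. by have := amulBl 0 0 x; rewrite !subrr. Qed.

Lemma amul0r x : mul x 0 = 0.
Proof. by have := amulBr x 0 0; rewrite !subrr. Qed.

Lemma amul_suml z (I : Type) (r : seq I) (P : pred I) (F : I -> V) :
  mul (\sum_(i <- r | P i) F i) z = \sum_(i <- r | P i) mul (F i) z.
Proof. by apply: (big_morph (mul^~ z)) => [x y|]; rewrite ?amulDl ?amul0l. Qed.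

Lemma amul_sumr z (I : Type) (r : seq I) (P : pred I) (F : I -> V) :
  mul z (\sum_(i <- r | P i) F i) = \sum_(i <- r | P i) mul z (F i).
Proof. by apply: (big_morph (mul z)) => [x y|]; rewrite ?amulDr ?amul0r. Qed.

Lemma in_span_subalgebra n (v : 'I_n -> V) :
  (forall i k, in_span v (mul (v i) (v k))) -> is_subalgebra mul (in_span v).
Proof.
move=> vv; have spanS := in_span_subspace v; split=> // _ _ [c ->] [d ->].
have [_ _ spanZ] := spanS.
rewrite amul_suml; apply: subspace_sum => // i.
rewrite amulZl amul_sumr; apply: (spanZ); apply: subspace_sum => // k.
by rewrite amulZr; apply: spanZ.
Qed.

(* [compl_mul u w] stands for [(1 - u) w] in the unitization. *)
Definition compl_mul u w := w - mul u w.

Lemma compl_mul_comb u n (c : 'I_n -> K) (y : 'I_n -> V) :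
  compl_mul u (\sum_l c l *: y l) = \sum_l c l *: compl_mul u (y l).
Proof.
rewrite /compl_mul amul_sumr -sumrB.
by apply: eq_bigr => l _; rewrite amulZr scalerBr.
Qed.

Lemma compl_mulD u y z : compl_mul u (y + z) = compl_mul u y + compl_mul u z.
Proof. by rewrite /compl_mul amulDr opprD addrACA. Qed.

Lemma compl_mul_idem u w : mul u u = u -> compl_mul u (mul u w) = 0.
Proof. by move=> uu; rewrite /compl_mul amulA uu subrr. Qed.

(* With [u] idempotent, [u a u = a u] says [(1 - u) a (1 - u) = (1 - u) a]. *)
Lemma compl_mulM u a b : mul u u = u -> mul u (mul a u) = mul a u ->
  mul (compl_mul u a) (compl_mul u b) = compl_mul u (mul a b).
Proof.
move=> uu uau; rewrite {1}/compl_mul amulBl !amulBr !amulA -(amulA u a u) uau.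
by rewrite /compl_mul amulA opprB addrA subrK.
Qed.

Inductive rideal (s : seq V) : V -> Prop :=
  | rideal_mem g of g \in s : rideal s g
  | rideal0 : rideal s 0
  | ridealD x y of rideal s x & rideal s y : rideal s (x + y)
  | ridealZ a x of rideal s x : rideal s (a *: x)
  | ridealM x z of rideal s x : rideal s (mul x z).

Lemma ridealB s x y : rideal s x -> rideal s y -> rideal s (x - y).
Proof. by move=> sx sy; rewrite -scaleN1r; apply: ridealD => //; apply: ridealZ. Qed.

Lemma rideal_sum s (I : Type) (r : seq I) (F : I -> V) :
  (forall i, rideal s (F i)) -> rideal s (\sum_(i <- r) F i).
Proof. by move=> sF; apply: big_ind => //; [exact: rideal0|exact: ridealD]. Qed.

Lemma rideal_cons a s x : rideal s x -> rideal (a :: s) x.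
Proof.
elim=> [g sg||y z _ sy _ sz|b y _ sy|y z _ sy].
- by apply: rideal_mem; rewrite in_cons sg orbT.
- exact: rideal0.
- exact: ridealD.
- exact: ridealZ.
- exact: ridealM.
Qed.

Lemma rideal_ideal (J : V -> Prop) s x :
  is_ideal mul J -> (forall g, g \in s -> J g) -> rideal s x -> J x.
Proof.
move=> [[J0 JD JZ] JM] Js; elim=> // [y z _ ? _ ?|a y _ ?|y z _ Jy].
- exact: JD.
- exact: JZ.
- exact: (JM z y Jy).2.
Qed.

Lemma rideal_left_unit s u w :
  (forall g, g \in s -> mul u g = g) -> rideal s w -> mul u w = w.
Proof.
move=> us; elim=> [g /us //||y z _ uy _ uz|a y _ uy|y z _ uy].
- exact: amul0r.
- by rewrite amulDr uy uz.
- by rewrite amulZr uy.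
- by rewrite amulA uy.
Qed.

Lemma rideal_mull s x w :
  (forall g, g \in s -> rideal s (mul x g)) -> rideal s w -> rideal s (mul x w).
Proof.
move=> xs; elim=> [g /xs //||y z _ xy _ xz|a y _ xy|y z _ xy].
- by rewrite amul0r; apply: rideal0.
- by rewrite amulDr; apply: ridealD.
- by rewrite amulZr; apply: ridealZ.
- by rewrite amulA; apply: ridealM.
Qed.

(* The von Neumann argument: a finitely generated right ideal of a regular
   algebra is generated by an idempotent; adjoining a generator [a] to the
   left unit [e] of the smaller ideal uses [g = e + f - f e], where [f = b y]
   is an idempotent with [f b = b] for [b = a - e a]. *)
Lemma rideal_has_left_unit s : vn_regular mul ->
  exists u, rideal s u /\ forall w, rideal s w -> mul u w = w.
Proof.
move=> regular; elim: s => [|a s [e [se eL]]].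
  by exists 0; split=> [|w]; [exact: rideal0|apply: rideal_left_unit].
set b := a - mul e a; have [y bb] := regular b; set f := mul b y.
set g := e + f - mul f e.
have ee : mul e e = e by exact: eL.
have eb : mul e b = 0 by rewrite amulBr amulA ee subrr.
have ef : mul e f = 0 by rewrite amulA eb amul0l.
have fb : mul f b = b by [].
have ff : mul f f = f by rewrite amulA fb.
have ge : mul g e = e by rewrite !amulBl !amulDl ee -amulA ee addrK.
have gf : mul g f = f by rewrite amulBl amulDl ef ff -amulA ef amul0r add0r subr0.
have ga : mul g a = a.
  by rewrite -(subrK (mul e a) a) -/b amulDr amulA ge -fb amulA gf.
have sa : rideal (a :: s) a by apply: rideal_mem; rewrite mem_head.
have se' : rideal (a :: s) e by exact: rideal_cons.
have sf : rideal (a :: s) f by apply/ridealM/ridealB => //; apply: ridealM.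
exists g; split; first by apply/ridealB/ridealM => //; apply: ridealD.
move=> w; apply: rideal_left_unit => h; rewrite in_cons => /orP [/eqP -> //|sh].
by rewrite -(eL h) ?amulA ?ge //; apply: rideal_mem.
Qed.

Section Defects.
Variables (m : nat) (x : 'I_m -> V) (C : 'I_m -> 'I_m -> 'I_m -> K).

Definition defect i k := mul (x i) (x k) - \sum_l C i k l *: x l.

Definition defect_gens : seq V :=
  [seq defect p.1 p.2 | p : 'I_m * 'I_m] ++
  [seq mul (x p.1) (defect p.2.1 p.2.2) | p : 'I_m * ('I_m * 'I_m)].

Lemma defect_in_gens i k : defect i k \in defect_gens.
Proof.
rewrite mem_cat; apply/orP; left.
exact: (@image_f _ _ (fun p : 'I_m * 'I_m => defect p.1 p.2) _ (i, k)).
Qed.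

Lemma mul_defect_in_gens l i k : mul (x l) (defect i k) \in defect_gens.
Proof.
rewrite mem_cat; apply/orP; right.
exact: (@image_f _ _ (fun p : 'I_m * ('I_m * 'I_m) => mul (x p.1) (defect p.2.1 p.2.2))
  _ (l, (i, k))).
Qed.

(* [x i (x l d) = (defect i l) d + sum_q C i l q (x q d)] for [d = defect i' k']. *)
Lemma rideal_defect_mull i w :
  rideal defect_gens w -> rideal defect_gens (mul (x i) w).
Proof.
apply: rideal_mull => _ /[!mem_cat] /orP [] /mapP [p _ ->].
  by apply: rideal_mem; apply: mul_defect_in_gens.
rewrite amulA.
have -> : mul (x i) (x p.1) = defect i p.1 + \sum_q C i p.1 q *: x q by rewrite subrK.
rewrite amulDl amul_suml; apply: ridealD.
  by apply/ridealM/rideal_mem/defect_in_gens.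
apply: rideal_sum => q; rewrite amulZl; apply: ridealZ.
by apply: rideal_mem; apply: mul_defect_in_gens.
Qed.

Lemma corrected_lifts : vn_regular mul -> exists u, rideal defect_gens u /\
  forall i k, mul (compl_mul u (x i)) (compl_mul u (x k)) =
              \sum_l C i k l *: compl_mul u (x l).
Proof.
move=> regular; have [u [gu uL]] := rideal_has_left_unit defect_gens regular.
have uu : mul u u = u by exact: uL.
exists u; split=> // i k; rewrite compl_mulM //; last exact/uL/rideal_defect_mull.
have ud : mul u (defect i k) = defect i k by apply/uL/rideal_mem/defect_in_gens.
have -> : mul (x i) (x k) = mul u (defect i k) + \sum_l C i k l *: x l.
  by rewrite ud subrK.
by rewrite -compl_mul_comb compl_mulD compl_mul_idem ?add0r.
Qed.

End Defects.

End Multiplication.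

Section Lifting.
Variables (K : fieldType) (R Q : lmodType K) (mulR : R -> R -> R) (mulQ : Q -> Q -> Q).
Variables (J : R -> Prop) (pi : {linear R -> Q}).
Hypotheses (mulR_alg : is_algebra_mul mulR) (regR : vn_regular mulR).
Hypothesis J_ideal : is_ideal mulR J.
Hypotheses (piM : forall x y, pi (mulR x y) = mulQ (pi x) (pi y))
  (pi_onto : forall q, exists x, pi x = q) (ker_pi : forall x, pi x = 0 <-> J x).

Lemma pi_in_span n (v : 'I_n -> R) (c : 'I_n -> K) :
  pi (\sum_i c i *: v i) = \sum_i c i *: pi (v i).
Proof. by rewrite linear_sum; apply: eq_bigr => i _; rewrite linearZ. Qed.

Lemma lift_fin_subalgebra (A : Q -> Prop) :
  is_subalgebra mulQ A -> fin_dim A ->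
  exists T : R -> Prop,
    [/\ is_subalgebra mulR T, fin_dim T,
        (forall x y, T x -> T y -> pi x = pi y -> x = y)
      & (forall q, A q <-> exists t, T t /\ pi t = q)].
Proof.
move=> [Asub AM] [n [v [Av spanv]]].
have [m [b [Ab spanb freeb]]] := free_spanning_family Av spanv.
have [C' bC'] := fin_all_exists (fun p : 'I_m * 'I_m => spanb _ (AM _ _ (Ab p.1) (Ab p.2))).
pose C i k := C' (i, k); have bC i k : mulQ (b i) (b k) = \sum_l C i k l *: b l := bC' (i, k).
have [x pix] : exists x : 'I_m -> R, forall i, pi (x i) = b i.
  exact: fin_all_exists (fun i => pi_onto (b i)).
have Jdefect i k : J (defect mulR x C i k).
  apply/ker_pi; rewrite linearB /= piM !pix bC pi_in_span.
  apply/eqP; rewrite subr_eq0; apply/eqP/eq_bigr => l _.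
  by congr (_ *: _); apply/esym/pix.
have [u [gu psiM]] := corrected_lifts mulR_alg x C regR.
pose psi i := compl_mul mulR u (x i).
have Ju : J u.
  apply: rideal_ideal J_ideal _ gu => _ /[!mem_cat] /orP [] /mapP [p _ ->] //.
  by case: J_ideal => _ /(_ (x p.1) _ (Jdefect p.2.1 p.2.2)) [].
have pi_psi i : pi (psi i) = b i.
  have /ker_pi piux : J (mulR u (x i)) by case: J_ideal => _ /(_ (x i) _ Ju) [].
  by rewrite linearB /= piux subr0 pix.
have pi_span c : pi (\sum_i c i *: psi i) = \sum_i c i *: b i.
  by rewrite pi_in_span; under eq_bigr do rewrite pi_psi.
exists (in_span psi); split.
- by apply: in_span_subalgebra => // i k; exists (C i k); rewrite psiM.
- by exists m, psi; split=> [i|y]; [exact: in_span_gen|].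
- by move=> _ _ [c ->] [d ->]; rewrite !pi_span => /free_family_coord cd;
    apply: eq_bigr => i _; rewrite cd.
- move=> q; split=> [/spanb [c ->]|[_ [[c ->] <-]]].
    by exists (\sum_i c i *: psi i); split; [exists c|rewrite pi_span].
  by rewrite pi_span; apply: (in_span_sub Asub Ab); exists c.
Qed.

Lemma complement_of_ideal : fin_dim (fun _ : Q => True) ->
  exists T : R -> Prop,
    [/\ is_subalgebra mulR T, (forall x, T x -> J x -> x = 0)
      & (forall r, exists t j, [/\ T t, J j & r = t + j])].
Proof.
move=> fdQ; have Qsub : is_subalgebra mulQ (fun _ => True) by [].
have [T [Tsub _ Tinj TQ]] := lift_fin_subalgebra Qsub fdQ.
exists T; split=> // [x Tx /ker_pi pix0|r].
  by apply: Tinj => //; [case: Tsub => -[]|rewrite pix0 raddf0].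
have [t [Tt pit]] := (TQ (pi r)).1 I.
exists t, (r - t); split=> //; last by rewrite addrC subrK.
by apply/ker_pi; rewrite linearB /= pit subrr.
Qed.

End Lifting.

Theorem lemma3p2 (K : fieldType) (R : lmodType K) (mulR : R -> R -> R)
  (J : R -> Prop) (Q : lmodType K) (mulQ : Q -> Q -> Q) (pi : R -> Q) :
  is_algebra_mul mulR -> vn_regular mulR -> is_ideal mulR J ->
  is_quotient_map mulR J mulQ pi ->
  (forall A : Q -> Prop, is_subalgebra mulQ A -> fin_dim A ->
     exists T : R -> Prop,
       [/\ is_subalgebra mulR T, fin_dim T,
           (forall x y, T x -> T y -> pi x = pi y -> x = y)
         & (forall q, A q <-> exists t, T t /\ pi t = q)])
  /\
  (fin_dim (fun _ : Q => True) ->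
     exists T : R -> Prop,
       [/\ is_subalgebra mulR T,
           (forall x, T x -> J x -> x = 0)
         & (forall r, exists t j, [/\ T t, J j & r = t + j])]).
Proof.
move=> mulR_alg regR J_ideal [pi_lin piM pi_onto ker_pi].
pose piL := HB.pack_for {linear R -> Q} pi (GRing.isLinear.Build K R Q *:%R pi pi_lin).
split.
  exact: (lift_fin_subalgebra mulR_alg regR J_ideal (pi := piL) piM pi_onto ker_pi).
exact: (complement_of_ideal mulR_alg regR J_ideal (pi := piL) piM pi_onto ker_pi).
Qed.
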